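(* Fix $\delta\in(0,1)$ and let $n_h\ge 32\,\frac{\log(4|\mathcal{X}|^2/\delta)}{(1-\gamma)^2}$. Let $\widehat P=\frac1{n_h}\sum_{i\in I_1}Z_i$ and $\widetilde P=\frac1{n_h}\sum_{i\in I_2}Z_i$ be hold-out estimates formed from two disjoint sets $I_1,I_2$ of $n_h$ i.i.d. generative transition samples each. Then for any (fixed) positive semidefinite $|\mathcal{X}|\times|\mathcal{X}|$ matrix $M$, with probability at least $1-\delta$, $$\|(I-\gamma\widehat P)^{-1}M(I-\gamma\widetilde P)^{-\top}\|_{\mathrm{diag}}\le 3\,\|(I-\gamma P)^{-1}M(I-\gamma P)^{-\top}\|_{\mathrm{diag}}.$$
   Context: Finite state space $\mathcal{X}$, discount $\gamma\in(0,1)$, row-stochastic transition matrix $P$ (row $x$ is $P(\cdot\mid x)$). A generative transition sample is a random $|\mathcal{X}|\times|\mathcal{X}|$ matrix $Z$ whose row $x$ equals $e_{x'}^\top$ with $x'\sim P(\cdot\mid x)$; samples are i.i.d. For a square matrix $A$, $\|A\|_{\mathrm{diag}}:=\max_i|A_{ii}|$. *)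

From HB Require Import structures.
From mathcomp Require Import all_boot all_order all_algebra.
From mathcomp Require Import reals exp.
Set Implicit Arguments. Unset Strict Implicit. Unset Printing Implicit Defensive.
Import Order.TTheory GRing.Theory Num.Theory.
Local Open Scope ring_scope.

Definition row_stochastic (R : realType) (n : nat) (P : 'M[R]_n) : Prop :=
  (forall i j, 0 <= P i j) /\ (forall i, \sum_j P i j = 1).

Definition psd (R : realType) (n : nat) (M : 'M[R]_n) : Prop :=
  M^T = M /\ forall v : 'cV[R]_n, 0 <= (v^T *m M *m v) 0 0.

Definition diagnorm (R : realType) (n : nat) (A : 'M[R]_n) : R :=
  \big[Num.max/0]_(i < n) `|A i i|.

(* One generative transition sample is encoded by the choice of next state
   f x ~ P(.|x) for every state x, independently; the matrix Z has row x
   equal to e_{f x}^T. *)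
Definition sample_mx (R : realType) (n : nat) (f : {ffun 'I_n -> 'I_n}) : 'M[R]_n :=
  \matrix_(i, j) (f i == j)%:R.

Definition sample_weight (R : realType) (n : nat) (P : 'M[R]_n)
  (f : {ffun 'I_n -> 'I_n}) : R := \prod_(x < n) P x (f x).

(* A family of N i.i.d. samples: outcome w : {ffun 'I_N -> {ffun 'I_n -> 'I_n}},
   with product probability. *)
Definition iid_weight (R : realType) (n N : nat) (P : 'M[R]_n)
  (w : {ffun 'I_N -> {ffun 'I_n -> 'I_n}}) : R :=
  \prod_(k < N) sample_weight P (w k).

Definition iid_prob (R : realType) (n N : nat) (P : 'M[R]_n)
  (E : pred {ffun 'I_N -> {ffun 'I_n -> 'I_n}}) : R :=
  \sum_(w | E w) iid_weight P w.

Definition holdout_est (R : realType) (n N : nat) (nh : nat) (I : {set 'I_N})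
  (w : {ffun 'I_N -> {ffun 'I_n -> 'I_n}}) : 'M[R]_n :=
  (nh%:R)^-1 *: \sum_(i in I) sample_mx R (w i).

From mathcomp Require Import all_boot all_order all_algebra.
From mathcomp Require Import reals exp sequences.
From mathcomp Require Import ring lra.

Set Implicit Arguments.
Unset Strict Implicit.
Unset Printing Implicit Defensive.
Import Order.TTheory GRing.Theory Num.Theory.
Local Open Scope ring_scope.

(* Write G := I - gamma P, C := G^-1 M G^-T and c := ||C||_diag, so that M = G C G^T
   and the matrix to bound is A1 C A2^T with Ak := (I - gamma Pk)^-1 G, Pk the two
   estimates.  Row x of Ak is e_x + gamma sum_y (I - gamma Pk)^-1_xy (row y Pk - row y P),
   and the rows of (I - gamma Pk)^-1 have absolute sums at most 1/(1 - gamma).  Hence if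
   every row deviation has C-seminorm at most (1 - gamma) sqrt(c/2), every row of Ak has
   C-seminorm at most (1 + 1/sqrt 2) sqrt c, and Cauchy-Schwarz bounds the diagonal of
   A1 C A2^T by (1 + 1/sqrt 2)^2 c <= 3 c.  A row deviation is the average of n_h i.i.d.
   centred vectors of C-seminorm at most 2 sqrt c; an exponential moment bound for the
   C-quadratic form of their sum, obtained by integrating out one sample at a time, gives
   a Chernoff tail delta / (2 |X|), and a union bound over the 2 |X| rows concludes. *)

Definition supnorm (R : realFieldType) (n : nat) (u : 'cV[R]_n) : R :=
  \big[Num.max/0]_i `|u i 0|.

Definition discount_mx (R : realFieldType) (n : nat) (g : R) (Q : 'M[R]_n) :=
  1%:M - g *: Q.

Section DiscountMx.
Variables (R : realFieldType) (n : nat).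
Implicit Types u : 'cV[R]_n.

Lemma supnorm_ge0 u : 0 <= supnorm u.
Proof. exact: bigmax_ge_id. Qed.

Lemma ler_supnorm u i : `|u i 0| <= supnorm u.
Proof. exact: (le_bigmax _ (fun i => `|u i 0|)). Qed.

Lemma supnorm_le u m : 0 <= m -> (forall i, `|u i 0| <= m) -> supnorm u <= m.
Proof. by move=> m_ge0 le_m; apply: bigmax_le. Qed.

Variables (g : R) (Q : 'M[R]_n).
Hypotheses (g_gt0 : 0 < g) (g_lt1 : g < 1).
Hypotheses (Q_ge0 : forall i j, 0 <= Q i j) (Q_sum1 : forall i, \sum_j Q i j = 1).

Lemma supnorm_stochastic_mul u : supnorm (Q *m u) <= supnorm u.
Proof.
apply: supnorm_le => [|i]; first exact: supnorm_ge0.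
rewrite mxE; apply: le_trans (ler_norm_sum _ _ _) _.
apply: (@le_trans _ _ (\sum_j Q i j * supnorm u)); last by rewrite -mulr_suml Q_sum1 mul1r.
apply: ler_sum => j _; rewrite normrM ger0_norm //.
by apply: ler_wpM2l => //; exact: ler_supnorm.
Qed.

Lemma supnorm_discount_mx_ge u :
  (1 - g) * supnorm u <= supnorm (discount_mx g Q *m u).
Proof.
set Gu := supnorm (discount_mx g Q *m u).
suff : supnorm u <= Gu + g * supnorm u by lra.
apply: supnorm_le => [|i].
  by rewrite addr_ge0 ?mulr_ge0 ?supnorm_ge0 ?ltW.
have -> : u i 0 = (discount_mx g Q *m u) i 0 + g * (Q *m u) i 0.
  by rewrite /discount_mx mulmxBl mul1mx -scalemxAl !mxE; ring.
apply: le_trans (ler_normD _ _) _; apply: lerD; first exact: ler_supnorm.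
rewrite normrM (ger0_norm (ltW g_gt0)); apply: ler_wpM2l; first exact: ltW.
exact: le_trans (ler_supnorm _ _) (supnorm_stochastic_mul u).
Qed.

Lemma discount_mx_unit : discount_mx g Q \in unitmx.
Proof.
rewrite unitmxE unitfE -det_tr; apply/negP => /det0P [v v_neq0 v_ker].
have Gv0 : discount_mx g Q *m v^T = 0.
  by rewrite -(trmxK (discount_mx g Q)) -trmx_mul v_ker linear0.
have sup0 : supnorm (0 : 'cV[R]_n) = 0.
  apply/eqP; rewrite eq_le supnorm_ge0 andbT.
  by apply: supnorm_le => // i; rewrite mxE normr0.
have := supnorm_discount_mx_ge v^T; rewrite Gv0 sup0 pmulr_rle0 ?subr_gt0 // => supv_le0.
move/negP: v_neq0; apply; apply/eqP/matrixP => i j.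
rewrite (ord1 i) mxE; apply/eqP; rewrite -normr_eq0 eq_le normr_ge0 andbT.
by apply: le_trans supv_le0; have := ler_supnorm v^T j; rewrite mxE.
Qed.

(* Test [invmx (discount_mx g Q)] against the sign vector of its row [x]. *)
Lemma sum_norm_inv_discount_mx x :
  \sum_y `|invmx (discount_mx g Q) x y| <= (1 - g)^-1.
Proof.
set Gi := invmx (discount_mx g Q).
pose s : 'cV[R]_n := \col_y (if 0 <= Gi x y then 1 else -1).
have sup_s : supnorm s <= 1.
  by apply: supnorm_le => // i; rewrite mxE; case: ifP; rewrite ?normrN normr1.
have Gs : discount_mx g Q *m (Gi *m s) = s by rewrite mulmxA mulmxV ?mul1mx ?discount_mx_unit.
have -> : \sum_y `|Gi x y| = (Gi *m s) x 0.
  rewrite mxE; apply: eq_bigr => y _; rewrite mxE.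
  by case: ifP => [/ger0_norm -> | /negbT]; rewrite ?mulr1 // -ltNge mulrN1 => /ltr0_norm.
apply: le_trans (ler_norm _) _; apply: le_trans (ler_supnorm _ x) _.
have := supnorm_discount_mx_ge (Gi *m s); rewrite Gs => le_s.
have g1_gt0 : 0 < 1 - g by rewrite subr_gt0.
by rewrite -(ler_pM2l g1_gt0) mulfV ?gt_eqF //; apply: le_trans sup_s.
Qed.

End DiscountMx.

Lemma col_sum_delta (R : nzRingType) (n : nat) (v : 'cV[R]_n) :
  v = \sum_z v z 0 *: delta_mx z 0.
Proof.
rewrite {1}(matrix_sum_delta v); apply: eq_bigr => z _.
by rewrite big_ord1 (ord1 0).
Qed.

Section ExpBounds.
Variable R : realType.
Implicit Types x v j : R.

Lemma mul1B_expR_le1 x : (1 - x) * expR x <= 1.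
Proof.
rewrite -[leRHS](expRxMexpNx_1 x) mulrC ler_pM2l ?expR_gt0 //.
by have := expR_ge1Dx (- x); lra.
Qed.

Lemma expR_le_quad x : x <= 1/2 -> expR x <= 1 + x + 2 * x ^+ 2.
Proof.
move=> x_le; have := mul1B_expR_le1 x; have := expR_gt0 x.
have : 0 <= x ^+ 2 * (1 - 2 * x) by apply: mulr_ge0; [exact: sqr_ge0 | lra].
nra.
Qed.

Lemma expR_half_le2 : expR (1/2 : R) <= 2.
Proof. by have := mul1B_expR_le1 (1/2 : R); have := expR_gt0 (1/2 : R); lra. Qed.

(* With [f v j := (v * j / 2) / (1 - v * j)], the exponent of the moment bound
   for [j] samples, this reads [v / 2 + f (v * (1 + v)) j <= f v (j + 1)]. *)
Lemma mgf_exponent_step v j : 0 <= v -> 0 <= j -> v * (j + 1) <= 1/2 ->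
  v / 2 + (v * (1 + v) * j / 2) / (1 - v * (1 + v) * j) <=
  (v * (j + 1) / 2) / (1 - v * (j + 1)).
Proof.
move=> v_ge0 j_ge0 vj1_le.
set a := 1 - v * (1 + v) * j; set b := 1 - v * (j + 1).
have vj_le : v * j <= 1/2 by lra.
have b_gt0 : 0 < b by rewrite /b; lra.
have b_le_a : b <= a by rewrite /a /b; nra.
have vvj_ge0 : 0 <= v * (1 + v) * j by rewrite !mulr_ge0 //; lra.
have a_le1 : a <= 1 by rewrite /a; lra.
have ab_le : a * b <= 1 - v * j by rewrite /b; nra.
have a_neq0 : a != 0 by rewrite lt0r_neq0 //; lra.
have b_neq0 : b != 0 by rewrite lt0r_neq0.
rewrite -subr_ge0.
have -> : (v * (j + 1) / 2) / b - (v / 2 + (v * (1 + v) * j / 2) / a) =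
          v * (1 - v * j - a * b) / (2 * (a * b)).
  by rewrite /a /b in a_neq0 b_neq0 *; field; rewrite a_neq0 b_neq0.
by apply: divr_ge0; nra.
Qed.

End ExpBounds.

Section IidSamples.
Variables (R : realType) (n N : nat) (P : 'M[R]_n).
Hypotheses (P_ge0 : forall i j, 0 <= P i j) (P_sum1 : forall i, \sum_j P i j = 1).

Local Notation sample := {ffun 'I_n -> 'I_n}.
Local Notation outcome := {ffun 'I_N -> sample}.

Lemma sample_weight_ge0 (f : sample) : 0 <= sample_weight P f.
Proof. by apply: prodr_ge0 => x _; exact: P_ge0. Qed.

Lemma iid_weight_ge0 (w : outcome) : 0 <= iid_weight P w.
Proof. by apply: prodr_ge0 => k _; exact: sample_weight_ge0. Qed.

Lemma sum_sample_weight : \sum_(f : sample) sample_weight P f = 1.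
Proof.
rewrite /sample_weight -(bigA_distr_bigA (fun x z => P x z)).
by rewrite big1 // => x _; exact: P_sum1.
Qed.

Lemma sum_iid_weight : \sum_(w : outcome) iid_weight P w = 1.
Proof.
rewrite /iid_weight -(bigA_distr_bigA (fun (k : 'I_N) (f : sample) => sample_weight P f)).
by rewrite big1 // => k _; exact: sum_sample_weight.
Qed.

Lemma sum_sample_weight_marginal y (phi : 'I_n -> R) :
  \sum_(f : sample) sample_weight P f * phi (f y) = \sum_z P y z * phi z.
Proof.
pose F x z := P x z * (if x == y then phi z else 1).
have -> : \sum_z P y z * phi z = \prod_x \sum_z F x z.
  rewrite [RHS](bigD1 y) //= [X in _ = _ * X]big1 => [|x /negbTE x_neq_y].
    by rewrite mulr1; apply: eq_bigr => z _; rewrite /F eqxx.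
  by under eq_bigr do rewrite /F x_neq_y mulr1; exact: P_sum1.
rewrite bigA_distr_bigA; apply: eq_bigr => f _.
rewrite /F big_split /= /sample_weight; congr (_ * _).
by rewrite -big_mkcond /= big_pred1_eq.
Qed.

Definition resample (w : outcome) (k : 'I_N) (f : sample) : outcome :=
  [ffun i => if i == k then f else w i].

Lemma resample_at w k f : resample w k f k = f.
Proof. by rewrite ffunE eqxx. Qed.

Lemma resample_other w k f i : i != k -> resample w k f i = w i.
Proof. by rewrite ffunE => /negbTE ->. Qed.

Lemma resampleK w k f : resample (resample w k f) k (w k) = w.
Proof. by apply/ffunP => i; rewrite !ffunE; case: eqP => // ->. Qed.

Lemma iid_weight_resample w k f :
  iid_weight P (resample w k f) * sample_weight P (w k) = iid_weight P w * sample_weight P f.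
Proof.
rewrite /iid_weight (bigD1 k) // [in RHS](bigD1 k) //= resample_at.
rewrite (eq_bigr (fun i => sample_weight P (w i))); last by move=> i /resample_other ->.
ring.
Qed.

(* [(w, f) |-> (resample w k f, w k)] is an involution preserving
   [iid_weight P w * sample_weight P f]. *)
Lemma sum_iid_weight_resample k (G : outcome -> R) :
  \sum_w iid_weight P w * G w =
  \sum_w iid_weight P w * \sum_(f : sample) sample_weight P f * G (resample w k f).
Proof.
under [RHS]eq_bigr do rewrite mulr_sumr.
rewrite pair_bigA /=.
pose h (wf : outcome * sample) := (resample wf.1 k wf.2, wf.1 k).
have hK : involutive h by case=> w f; rewrite /h /= resampleK resample_at.
rewrite (reindex_inj (inv_inj hK)) /=.
rewrite (eq_bigr (fun wf => iid_weight P wf.1 * G wf.1 * sample_weight P wf.2)); last first.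
  by case=> w f _ /=; rewrite resampleK mulrA iid_weight_resample; ring.
rewrite -(pair_bigA _ (fun w f => iid_weight P w * G w * sample_weight P f)) /=.
by apply: eq_bigr => w _; rewrite -mulr_sumr sum_sample_weight mulr1.
Qed.

Lemma eq_iid_prob (E F : pred outcome) : E =1 F -> iid_prob P E = iid_prob P F.
Proof. exact: eq_bigl. Qed.

Lemma iid_prob_le (E F : pred outcome) :
  (forall w, E w -> F w) -> iid_prob P E <= iid_prob P F.
Proof.
move=> EF; rewrite /iid_prob [leLHS]big_mkcond [leRHS]big_mkcond /=.
apply: ler_sum => w _; case: ifP => [/EF -> //|_].
by case: ifP => // _; exact: iid_weight_ge0.
Qed.

Lemma iid_prob_predC (E : pred outcome) : iid_prob P (predC E) = 1 - iid_prob P E.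
Proof. by rewrite /iid_prob -sum_iid_weight [in RHS](bigID E) /=; ring. Qed.

Lemma iid_prob_exists_le (I : finType) (E : I -> pred outcome) :
  iid_prob P (fun w => [exists i, E i w]) <= \sum_i iid_prob P (E i).
Proof.
rewrite /iid_prob; under [leRHS]eq_bigr do rewrite big_mkcond /=.
rewrite exchange_big [leLHS]big_mkcond /=; apply: ler_sum => w _.
have sum_ge0 (A : pred I) : 0 <= \sum_(i | A i) (if E i w then iid_weight P w else 0).
  by apply: sumr_ge0 => i _; case: ifP => // _; exact: iid_weight_ge0.
case: existsP => [[i Ei]|_]; last exact: sum_ge0.
by rewrite (bigD1 i) //= Ei lerDl.
Qed.

End IidSamples.

Section QuadraticForm.
Variables (R : realType) (n : nat) (C : 'M[R]_n).
Implicit Types u v : 'cV[R]_n.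

Definition bform u v : R := (u^T *m C *m v) 0 0.
Definition qform u : R := bform u u.
Definition qnorm u : R := Num.sqrt (qform u).

Lemma bformDl u v (w : 'cV[R]_n) : bform (u + v) w = bform u w + bform v w.
Proof. by rewrite /bform linearD /= !mulmxDl mxE. Qed.

Lemma bformDr u v (w : 'cV[R]_n) : bform w (u + v) = bform w u + bform w v.
Proof. by rewrite /bform !mulmxDr mxE. Qed.

Lemma bformZl a u (w : 'cV[R]_n) : bform (a *: u) w = a * bform u w.
Proof. by rewrite /bform linearZ /= -!scalemxAl mxE. Qed.

Lemma bformZr a u (w : 'cV[R]_n) : bform w (a *: u) = a * bform w u.
Proof. by rewrite /bform -!scalemxAr mxE. Qed.

Lemma bformNr u (w : 'cV[R]_n) : bform w (- u) = - bform w u.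
Proof. by rewrite -scaleN1r bformZr mulN1r. Qed.

Lemma bform_sumr (I : finType) (F : I -> 'cV[R]_n) (w : 'cV[R]_n) :
  bform w (\sum_i F i) = \sum_i bform w (F i).
Proof. by rewrite /bform mulmx_sumr summxE. Qed.

Lemma qform0 : qform 0 = 0.
Proof. by rewrite /qform /bform trmx0 !mul0mx mxE. Qed.

Lemma qformZ a u : qform (a *: u) = a ^+ 2 * qform u.
Proof. by rewrite /qform bformZl bformZr mulrA expr2. Qed.

Lemma qform_delta i : qform (delta_mx i 0) = C i i.
Proof. by rewrite /qform /bform trmx_delta -mulmxA -rowE -colE !mxE. Qed.

Hypothesis C_sym : C^T = C.
Hypothesis C_psd : forall v : 'cV[R]_n, 0 <= (v^T *m C *m v) 0 0.

Lemma bformC u v : bform u v = bform v u.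
Proof.
rewrite /bform; have -> : (u^T *m C *m v) 0 0 = (u^T *m C *m v)^T 0 0 by rewrite [RHS]mxE.
by rewrite !trmx_mul trmxK C_sym mulmxA.
Qed.

Lemma qform_ge0 u : 0 <= qform u.
Proof. exact: C_psd. Qed.

Lemma qformD u v : qform (u + v) = qform u + 2 * bform u v + qform v.
Proof. rewrite /qform bformDl !bformDr (bformC v u); ring. Qed.

Lemma bform_sqr_le u v : bform u v ^+ 2 <= qform u * qform v.
Proof.
have poly_ge0 t : 0 <= qform u + 2 * t * bform u v + t ^+ 2 * qform v.
  by have := qform_ge0 (u + t *: v); rewrite qformD qformZ bformZr mulrA.
have qu_ge0 := qform_ge0 u; have qv_ge0 := qform_ge0 v.
have [qv0|qv_neq0] := eqVneq (qform v) 0.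
  rewrite qv0 mulr0; have [->|b_neq0] := eqVneq (bform u v) 0; first by rewrite expr0n.
  have := poly_ge0 (- (qform u + 1) / (2 * bform u v)).
  have -> : 2 * (- (qform u + 1) / (2 * bform u v)) * bform u v = - (qform u + 1).
    by field; rewrite b_neq0.
  by rewrite qv0 mulr0; lra.
have qv_gt0 : 0 < qform v by rewrite lt_def qv_neq0 qv_ge0.
have := poly_ge0 (- bform u v / qform v).
rewrite -(ler_pM2l qv_gt0) mulr0.
have -> : qform v * (qform u + 2 * (- bform u v / qform v) * bform u v
          + (- bform u v / qform v) ^+ 2 * qform v) = qform u * qform v - bform u v ^+ 2.
  by field.
by rewrite subr_ge0.
Qed.

Lemma qnorm_ge0 u : 0 <= qnorm u.
Proof. exact: sqrtr_ge0. Qed.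

Lemma sqr_qnorm u : qnorm u ^+ 2 = qform u.
Proof. by rewrite sqr_sqrtr // qform_ge0. Qed.

Lemma qnorm0 : qnorm 0 = 0.
Proof. by rewrite /qnorm qform0 sqrtr0. Qed.

Lemma qnormZ a u : qnorm (a *: u) = `|a| * qnorm u.
Proof. by rewrite /qnorm qformZ sqrtrM ?sqr_ge0 // sqrtr_sqr. Qed.

Lemma ler_qnorm_sqr u m : 0 <= m -> qnorm u <= m -> qform u <= m ^+ 2.
Proof. by move=> m_ge0 le_um; rewrite -sqr_qnorm ler_pXn2r ?nnegrE ?qnorm_ge0. Qed.

Lemma ler_norm_bform u v : `|bform u v| <= qnorm u * qnorm v.
Proof.
rewrite -(ler_pXn2r (n := 2)) ?nnegrE ?normr_ge0 ?mulr_ge0 ?qnorm_ge0 //.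
by rewrite real_normK ?num_real // exprMn !sqr_qnorm bform_sqr_le.
Qed.

Lemma ler_qnormD u v : qnorm (u + v) <= qnorm u + qnorm v.
Proof.
rewrite -(ler_pXn2r (n := 2)) ?nnegrE ?qnorm_ge0 ?addr_ge0 ?qnorm_ge0 //.
rewrite sqr_qnorm qformD sqrrD !sqr_qnorm.
have := ler_norm_bform u v; have := ler_norm (bform u v); lra.
Qed.

Lemma ler_qnorm_sum (I : finType) (A : pred I) (F : I -> 'cV[R]_n) :
  qnorm (\sum_(i | A i) F i) <= \sum_(i | A i) qnorm (F i).
Proof.
elim/big_rec2: _ => [|i s u _ IH]; first by rewrite qnorm0.
by apply: le_trans (ler_qnormD _ _) _; rewrite lerD2l.
Qed.

Variable c : R.
Hypothesis C_diag_le : forall i, C i i <= c.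
Hypothesis c_ge0 : 0 <= c.

Lemma qnorm_delta_le i : qnorm (delta_mx i 0) <= Num.sqrt c.
Proof. by rewrite /qnorm qform_delta ler_sqrt. Qed.

Lemma qnorm_le_sum_norm u : qnorm u <= Num.sqrt c * \sum_z `|u z 0|.
Proof.
rewrite {1}(col_sum_delta u) mulr_sumr; apply: le_trans (ler_qnorm_sum _ _) _.
apply: ler_sum => z _; rewrite qnormZ mulrC.
by apply: ler_wpM2r; [exact: normr_ge0 | exact: qnorm_delta_le].
Qed.

Lemma qform_le_sum_norm u : qform u <= c * (\sum_z `|u z 0|) ^+ 2.
Proof.
rewrite -[c]sqr_sqrtr // -exprMn; apply: ler_qnorm_sqr (qnorm_le_sum_norm u).
by rewrite mulr_ge0 ?sqrtr_ge0 ?sumr_ge0.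
Qed.

Variable p : 'cV[R]_n.
Hypotheses (p_ge0 : forall z, 0 <= p z 0) (p_sum1 : \sum_z p z 0 = 1).

Definition sample_dev z : 'cV[R]_n := delta_mx z 0 - p.

Lemma qnorm_sample_dev_le z : qnorm (sample_dev z) <= 2 * Num.sqrt c.
Proof.
apply: le_trans (ler_qnormD _ _) _.
rewrite -scaleN1r qnormZ normrN normr1 mul1r.
have := qnorm_le_sum_norm p; under eq_bigr do rewrite ger0_norm //.
rewrite p_sum1 mulr1; have := qnorm_delta_le z; lra.
Qed.

Lemma qform_sample_dev_le z : qform (sample_dev z) <= 4 * c.
Proof.
have -> : 4 * c = (2 * Num.sqrt c) ^+ 2 by rewrite exprMn sqr_sqrtr //; ring.
by apply: ler_qnorm_sqr; [rewrite mulr_ge0 ?sqrtr_ge0 | exact: qnorm_sample_dev_le].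
Qed.

Lemma bform_sample_dev s z :
  bform s (sample_dev z) = bform (delta_mx z 0) s - \sum_x p x 0 * bform (delta_mx x 0) s.
Proof.
rewrite /sample_dev bformDr bformNr [bform s (delta_mx _ _)]bformC.
rewrite [in bform s p](col_sum_delta p) bform_sumr.
by congr (_ - _); apply: eq_bigr => x _; rewrite bformZr bformC.
Qed.

Lemma sum_bform_sample_dev s : \sum_z p z 0 * bform s (sample_dev z) = 0.
Proof.
under eq_bigr do rewrite bform_sample_dev mulrBr.
by rewrite sumrB -mulr_suml p_sum1 mul1r subrr.
Qed.

Lemma sum_sqr_bform_sample_dev_le s :
  \sum_z p z 0 * bform s (sample_dev z) ^+ 2 <= c * qform s.
Proof.
set m := \sum_x p x 0 * bform (delta_mx x 0) s.
have -> : \sum_z p z 0 * bform s (sample_dev z) ^+ 2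
          = \sum_z p z 0 * bform (delta_mx z 0) s ^+ 2 - m ^+ 2.
  under eq_bigr do rewrite bform_sample_dev -/m sqrrB.
  rewrite (eq_bigr (fun z => p z 0 * bform (delta_mx z 0) s ^+ 2
                             - 2 * m * (p z 0 * bform (delta_mx z 0) s) + m ^+ 2 * p z 0));
    last by move=> z _; ring.
  by rewrite big_split sumrB /= -!mulr_sumr p_sum1 -/m; ring.
suff : \sum_z p z 0 * bform (delta_mx z 0) s ^+ 2 <= c * qform s by have := sqr_ge0 m; lra.
rewrite -[leRHS]mul1r -p_sum1 mulr_suml; apply: ler_sum => z _.
apply: ler_wpM2l => //; apply: le_trans (bform_sqr_le _ _) _.
by rewrite qform_delta ler_wpM2r ?qform_ge0.
Qed.

(* Expand [qform (s + sample_dev z)]: the cross term is centred, and its exponential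
   moment is controlled by [expR x <= 1 + x + 2 x^2] and the variance bound above. *)
Lemma mgf_sample_dev_step s mu : 0 <= mu ->
  (forall z, 2 * mu * `|bform s (sample_dev z)| <= 1/2) ->
  \sum_z p z 0 * expR (mu * qform (s + sample_dev z)) <=
  expR (4 * c * mu) * expR (mu * (1 + 8 * c * mu) * qform s).
Proof.
move=> mu_ge0 small.
have term_le z : p z 0 * expR (mu * qform (s + sample_dev z)) <=
    expR (mu * qform s + 4 * c * mu) * (p z 0 * expR (2 * mu * bform s (sample_dev z))).
  rewrite mulrCA -expRD; apply: ler_wpM2l; first exact: p_ge0.
  by rewrite ler_expR qformD; have := qform_sample_dev_le z; nra.
apply: le_trans (ler_sum _ (fun z _ => term_le z)) _; rewrite -mulr_sumr.
have quad_le : \sum_z p z 0 * expR (2 * mu * bform s (sample_dev z)) <=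
               expR (8 * c * mu ^+ 2 * qform s).
  apply: (@le_trans _ _ (\sum_z p z 0 * (1 + 2 * mu * bform s (sample_dev z)
                             + 2 * (2 * mu * bform s (sample_dev z)) ^+ 2))).
    apply: ler_sum => z _; apply: ler_wpM2l; first exact: p_ge0.
    by apply: expR_le_quad; have := small z; have := ler_norm (bform s (sample_dev z)); nra.
  rewrite (eq_bigr (fun z => p z 0 + 2 * mu * (p z 0 * bform s (sample_dev z))
                   + 8 * mu ^+ 2 * (p z 0 * bform s (sample_dev z) ^+ 2))); last first.
    by move=> z _; ring.
  rewrite !big_split /= -!mulr_sumr p_sum1 sum_bform_sample_dev mulr0 addr0.
  apply: le_trans (expR_ge1Dx _); rewrite lerD2l.
  by have := sum_sqr_bform_sample_dev_le s; have := sqr_ge0 mu; nra.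
apply: le_trans (ler_wpM2l (expR_ge0 _) quad_le) _.
by rewrite -!expRD ler_expR; lra.
Qed.

Variables (N : nat) (P : 'M[R]_n) (y : 'I_n).
Hypotheses (P_ge0 : forall i j, 0 <= P i j) (P_sum1 : forall i, \sum_j P i j = 1).
Hypothesis p_row : forall z, p z 0 = P y z.

Local Notation outcome := {ffun 'I_N -> {ffun 'I_n -> 'I_n}}.

Definition dev_sum (J : {set 'I_N}) (w : outcome) : 'cV[R]_n :=
  \sum_(i in J) sample_dev (w i y).

Lemma qnorm_dev_sum_le J (w : outcome) :
  qnorm (dev_sum J w) <= #|J|%:R * (2 * Num.sqrt c).
Proof.
apply: le_trans (ler_qnorm_sum _ _) _.
apply: le_trans (ler_sum _ (fun i _ => qnorm_sample_dev_le (w i y))) _.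
by rewrite sumr_const [leRHS]mulr_natl.
Qed.

Lemma ler_norm_bform_dev_sum J (w : outcome) z :
  `|bform (dev_sum J w) (sample_dev z)| <= 4 * c * #|J|%:R.
Proof.
apply: le_trans (ler_norm_bform _ _) _.
apply: le_trans (ler_pM (qnorm_ge0 _) (qnorm_ge0 _)
                   (qnorm_dev_sum_le J w) (qnorm_sample_dev_le z)) _.
have -> : #|J|%:R * (2 * Num.sqrt c) * (2 * Num.sqrt c) = 4 * #|J|%:R * Num.sqrt c ^+ 2.
  by ring.
by rewrite sqr_sqrtr //; lra.
Qed.

(* Condition on all samples but the [k]-th, then average over the [k]-th. *)
Lemma mgf_dev_sum_setD1 (J : {set 'I_N}) k mu :
  k \in J -> 0 <= mu -> 8 * c * mu * #|J|%:R <= 1/2 ->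
  \sum_w iid_weight P w * expR (mu * qform (dev_sum J w)) <=
  expR (4 * c * mu) *
    \sum_w iid_weight P w * expR (mu * (1 + 8 * c * mu) * qform (dev_sum (J :\ k) w)).
Proof.
move=> kJ mu_ge0 small.
have dev_sumE (w : outcome) : dev_sum J w = dev_sum (J :\ k) w + sample_dev (w k y).
  by rewrite /dev_sum (big_setD1 _ kJ) addrC.
have dev_sum_resample (w : outcome) f :
    dev_sum (J :\ k) (resample w k f) = dev_sum (J :\ k) w.
  by apply: eq_bigr => i; rewrite in_setD1 => /andP[/resample_other -> _].
have card_le : #|J :\ k|%:R <= #|J|%:R :> R.
  by rewrite ler_nat; apply/subset_leq_card/subsetDl.
rewrite (sum_iid_weight_resample P_sum1 k) mulr_sumr; apply: ler_sum => w _.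
rewrite mulrCA; apply: ler_wpM2l; first exact: iid_weight_ge0.
under eq_bigr do rewrite dev_sumE dev_sum_resample resample_at.
rewrite (sum_sample_weight_marginal P_sum1 y
           (fun z => expR (mu * qform (dev_sum (J :\ k) w + sample_dev z)))).
under eq_bigr do rewrite -p_row.
apply: mgf_sample_dev_step => // z.
have := ler_norm_bform_dev_sum (J :\ k) w z.
have : c * mu * #|J :\ k|%:R <= c * mu * #|J|%:R by rewrite ler_wpM2l ?mulr_ge0.
nra.
Qed.

Lemma mgf_dev_sum (J : {set 'I_N}) mu : 0 <= mu -> 8 * c * mu * #|J|%:R <= 1/2 ->
  \sum_w iid_weight P w * expR (mu * qform (dev_sum J w)) <=
  expR ((8 * c * mu * #|J|%:R / 2) / (1 - 8 * c * mu * #|J|%:R)).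
Proof.
move J_card : #|J| => j; elim: j J J_card mu => [|j IH] J J_card mu mu_ge0 small.
  rewrite (cards0_eq J_card) mulr0 mul0r mul0r expR0 -(sum_iid_weight N P_sum1).
  rewrite (eq_bigr (fun w => iid_weight P w)) // => w _.
  by rewrite /dev_sum big_set0 qform0 mulr0 expR0 mulr1.
have [k kJ] : exists k, k \in J by apply/set0Pn; rewrite -card_gt0 J_card.
have Jk_card : #|J :\ k| = j by have := cardsD1 k J; rewrite kJ J_card add1n => -[].
set v := 8 * c * mu.
have v_ge0 : 0 <= v by rewrite /v !mulr_ge0.
have small_J : v * #|J|%:R <= 1/2 by rewrite J_card.
have v_small : v * (j%:R + 1) <= 1/2 by rewrite natr1.
have mu'_ge0 : 0 <= mu * (1 + v) by rewrite mulr_ge0 //; lra.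
have small' : 8 * c * (mu * (1 + v)) * j%:R <= 1/2.
  rewrite mulrA -/v; have : 0 <= j%:R :> R by []; nra.
apply: le_trans (mgf_dev_sum_setD1 kJ mu_ge0 small_J) _.
apply: le_trans (ler_wpM2l (expR_ge0 _) (IH _ Jk_card _ mu'_ge0 small')) _.
rewrite -expRD ler_expR mulrA -/v -(natr1 j).
have -> : 4 * c * mu = v / 2 by rewrite /v; field.
exact: mgf_exponent_step.
Qed.

Lemma prob_qform_dev_sum_gt (J : {set 'I_N}) t : 0 < c -> (0 < #|J|)%N ->
  iid_prob P (fun w => t < qform (dev_sum J w)) <=
  expR (1/2) * expR (- (t / (16 * c * #|J|%:R))).
Proof.
move=> c_gt0 J_gt0.
set m := #|J|%:R : R; have m_gt0 : 0 < m by rewrite ltr0n.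
set mu := (16 * c * m)^-1.
have mu_gt0 : 0 < mu by rewrite invr_gt0 !mulr_gt0.
have mu_m : 8 * c * mu * m = 1/2 by rewrite /mu; field; rewrite !gt_eqF.
have := mgf_dev_sum (J := J) (ltW mu_gt0); rewrite -/m mu_m => /(_ (lexx _)) mgf.
rewrite (_ : (1/2 / 2) / (1 - 1/2) = 1/2) in mgf; last by field.
apply: (@le_trans _ _ (\sum_w iid_weight P w * expR (mu * qform (dev_sum J w))
                                         * expR (- (mu * t)))).
  rewrite /iid_prob big_mkcond /=; apply: ler_sum => w _.
  have iw_ge0 := iid_weight_ge0 P_ge0 w.
  case: ifP => [t_lt|_]; last by rewrite !mulr_ge0 ?expR_ge0.
  rewrite -[leLHS]mulr1 -mulrA -expRD ler_wpM2l //.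
  by apply: le_trans (expR_ge1Dx _); have := ltW mu_gt0; have := ltW t_lt; nra.
rewrite -mulr_suml mulrC; apply: le_trans (ler_wpM2l (expR_ge0 _) mgf) _.
by rewrite mulrC [t * mu]mulrC.
Qed.

End QuadraticForm.

Definition row_dev (R : nzRingType) (n : nat) (P Q : 'M[R]_n) (y : 'I_n) : 'cV[R]_n :=
  (row y Q - row y P)^T.

Section Holdout.
Variables (R : realType) (n N nh : nat) (I : {set 'I_N}).
Variable w : {ffun 'I_N -> {ffun 'I_n -> 'I_n}}.
Hypotheses (I_card : #|I| = nh) (nh_gt0 : (0 < nh)%N).

Lemma holdout_estE y j :
  holdout_est R nh I w y j = nh%:R^-1 * \sum_(i in I) ((w i y == j)%:R : R).
Proof.
rewrite /holdout_est mxE summxE; congr (_ * _); apply: eq_bigr => i _.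
by rewrite /sample_mx mxE.
Qed.

Lemma holdout_est_stochastic : row_stochastic (holdout_est R nh I w).
Proof.
split=> [y j|y]; rewrite ?holdout_estE.
  by rewrite mulr_ge0 ?invr_ge0 // sumr_ge0 // => i _; exact: ler0n.
under eq_bigr do rewrite holdout_estE.
rewrite -mulr_sumr exchange_big /= (eq_bigr (fun _ => 1)); last first.
  move=> i _; rewrite (bigD1 (w i y)) //= eqxx big1 ?addr0 // => j /negbTE.
  by rewrite eq_sym => ->.
by rewrite sumr_const I_card mulVf // pnatr_eq0 -lt0n.
Qed.

Lemma row_dev_holdout_est (P : 'M[R]_n) y :
  row_dev P (holdout_est R nh I w) y = nh%:R^-1 *: dev_sum (row y P)^T y I w.
Proof.
apply/matrixP => i j; rewrite (ord1 j) !mxE /dev_sum !summxE.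
under eq_bigr do rewrite /sample_mx mxE.
under [X in _ = _ * X]eq_bigr do rewrite /sample_dev !mxE eqxx andbT eq_sym.
rewrite sumrB sumr_const I_card -mulr_natr.
by field; rewrite pnatr_eq0 -lt0n.
Qed.

End Holdout.

Lemma sample_size_gt0 (R : realType) (n nh : nat) (gamma delta : R) :
  (0 < n)%N -> 0 < gamma < 1 -> 0 < delta < 1 ->
  32 * ln (4 * n%:R ^+ 2 / delta) / (1 - gamma) ^+ 2 <= nh%:R -> (0 < nh)%N.
Proof.
move=> n_gt0 /andP[g_gt0 g_lt1] /andP[d_gt0 d_lt1] nh_ge.
have L_gt0 : 0 < ln (4 * n%:R ^+ 2 / delta).
  apply: ln_gt0; rewrite ltr_pdivlMr // mul1r.
  have : 1 <= n%:R ^+ 2 :> R by rewrite expr_ge1 // ler1n.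
  lra.
rewrite -(ltr0n R); apply: lt_le_trans nh_ge.
by rewrite divr_gt0 ?mulr_gt0 ?exprn_gt0 ?subr_gt0.
Qed.

Lemma holdout_est_sample_stochastic (R : realType) (n N nh : nat) (gamma delta : R)
    (I : {set 'I_N}) (w : {ffun 'I_N -> {ffun 'I_n -> 'I_n}}) :
  0 < gamma < 1 -> 0 < delta < 1 ->
  32 * ln (4 * n%:R ^+ 2 / delta) / (1 - gamma) ^+ 2 <= nh%:R -> #|I| = nh ->
  row_stochastic (holdout_est R nh I w).
Proof.
move=> g01 d01 nh_ge I_card; have [n0|n_gt0] := posnP n.
  by split=> [i|i]; have := leq_trans (ltn_ord i) (eq_leq n0); rewrite ltn0.
exact/holdout_est_stochastic/(sample_size_gt0 n_gt0 g01 d01 nh_ge).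
Qed.

Lemma diagnorm_ge0 (R : realType) (n : nat) (A : 'M[R]_n) : 0 <= diagnorm A.
Proof. exact: bigmax_ge_id. Qed.

Lemma ler_diagnorm (R : realType) (n : nat) (A : 'M[R]_n) i : A i i <= diagnorm A.
Proof. exact: le_trans (ler_norm _) (le_bigmax _ (fun i => `|A i i|) i). Qed.

Lemma diagnorm_le (R : realType) (n : nat) (A : 'M[R]_n) m :
  0 <= m -> (forall i, `|A i i| <= m) -> diagnorm A <= m.
Proof. by move=> m_ge0 le_m; apply: bigmax_le. Qed.

Lemma mulmx_tr_diag (R : realType) (n : nat) (C A B : 'M[R]_n) x :
  (A *m C *m B^T) x x = bform C (row x A)^T (row x B)^T.
Proof.
rewrite /bform trmxK -row_mul !mxE; apply: eq_bigr => k _; rewrite !mxE.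
by congr (_ * _); rewrite !mxE.
Qed.

Lemma psd_mulmx_tr (R : realType) (n : nat) (B M : 'M[R]_n) :
  psd M -> psd (B *m M *m B^T).
Proof.
move=> [M_sym M_psd]; split; first by rewrite !trmx_mul trmxK M_sym mulmxA.
by move=> v; have := M_psd (B^T *m v); rewrite trmx_mul trmxK !mulmxA.
Qed.

Lemma chernoff_sample_size_le (R : realType) (n nh : nat) (gamma delta c : R) :
  (0 < n)%N -> 0 < gamma < 1 -> 0 < delta < 1 -> 0 < c -> (0 < nh)%N ->
  32 * ln (4 * n%:R ^+ 2 / delta) / (1 - gamma) ^+ 2 <= nh%:R ->
  expR (1/2) * expR (- (c * (1 - gamma) ^+ 2 / 2 * nh%:R ^+ 2 / (16 * c * nh%:R)))
  <= delta / (2 * n%:R).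
Proof.
move=> n_gt0 /andP[g_gt0 g_lt1] /andP[d_gt0 d_lt1] c_gt0 nh_gt0 nh_ge.
have n_ge1 : 1 <= n%:R :> R by rewrite ler1n.
have n_neq0 : n%:R != 0 :> R by rewrite pnatr_eq0 -lt0n.
set L := ln (4 * n%:R ^+ 2 / delta).
have L_le : L <= c * (1 - gamma) ^+ 2 / 2 * nh%:R ^+ 2 / (16 * c * nh%:R).
  have -> : c * (1 - gamma) ^+ 2 / 2 * nh%:R ^+ 2 / (16 * c * nh%:R) =
            (1 - gamma) ^+ 2 * nh%:R / 32.
    by field; rewrite !lt0r_neq0 ?ltr0n.
  have g2_gt0 : 0 < (1 - gamma) ^+ 2 by rewrite exprn_gt0 // subr_gt0.
  by move: nh_ge; rewrite -/L ler_pdivrMr // ler_pdivlMr ?ltr0n //; lra.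
have expNL : expR (- L) = delta / (4 * n%:R ^+ 2).
  by rewrite expRN lnK ?invf_div // posrE divr_gt0 ?mulr_gt0 ?exprn_gt0 ?ltr0n.
apply: le_trans (ler_pM (expR_ge0 _) (expR_ge0 _) (expR_half_le2 R)
                   (_ : _ <= expR (- L))) _; first by rewrite ler_expR lerN2.
rewrite expNL -subr_ge0.
have -> : delta / (2 * n%:R) - 2 * (delta / (4 * n%:R ^+ 2)) =
          delta * (n%:R - 1) / (2 * n%:R ^+ 2) by field.
by rewrite divr_ge0 ?mulr_ge0 ?sqr_ge0 ?subr_ge0 // ltW.
Qed.

Lemma prob_holdout_row_dev_gt (R : realType) (n N nh : nat) (gamma delta : R)
    (P C : 'M[R]_n) (I : {set 'I_N}) (y : 'I_n) :
  row_stochastic P -> psd C -> 0 < gamma < 1 -> 0 < delta < 1 ->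
  32 * ln (4 * n%:R ^+ 2 / delta) / (1 - gamma) ^+ 2 <= nh%:R -> #|I| = nh ->
  iid_prob P (fun w => diagnorm C * (1 - gamma) ^+ 2 / 2
                       < qform C (row_dev P (holdout_est R nh I w) y))
  <= delta / (2 * n%:R).
Proof.
move=> [P_ge0 P_sum1] [C_sym C_psd] g01 d01 nh_ge I_card.
have n_gt0 : (0 < n)%N := leq_ltn_trans (leq0n y) (ltn_ord y).
have nh_gt0 := sample_size_gt0 n_gt0 g01 d01 nh_ge.
set c := diagnorm C; set t := c * (1 - gamma) ^+ 2 / 2.
have C_diag_le := ler_diagnorm C; have c_ge0 := diagnorm_ge0 C.
set p : 'cV[R]_n := (row y P)^T.
have p_row z : p z 0 = P y z by rewrite !mxE.
have p_ge0 z : 0 <= p z 0 by rewrite p_row.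
have p_sum1 : \sum_z p z 0 = 1 by under eq_bigr do rewrite p_row; exact: P_sum1.
have [c0|c_neq0] := eqVneq c 0.
  rewrite /iid_prob big_pred0 => [|w].
    by case/andP: d01 => d_gt0 _; rewrite divr_ge0 ?mulr_ge0 ?ler0n ?ltW.
  apply/negbTE; rewrite -leNgt /t c0 !mul0r.
  have := qform_le_sum_norm C_sym C_psd C_diag_le c_ge0 (row_dev P (holdout_est R nh I w) y).
  by rewrite -/c c0 mul0r.
have c_gt0 : 0 < c by rewrite lt_def c_neq0 c_ge0.
rewrite (@eq_iid_prob _ _ _ _ _ (fun w => t * nh%:R ^+ 2 < qform C (dev_sum p y I w)));
  last first.
  move=> w /=; rewrite row_dev_holdout_est // qformZ exprVn mulrC.
  by rewrite ltr_pdivlMr ?exprn_gt0 ?ltr0n.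
apply: le_trans (prob_qform_dev_sum_gt C_sym C_psd C_diag_le c_ge0 p_ge0 p_sum1
                   P_ge0 P_sum1 p_row _ c_gt0 _) _; first by rewrite I_card.
by rewrite I_card; apply: chernoff_sample_size_le.
Qed.

Lemma prob_holdout_rows_dev_gt (R : realType) (n N nh : nat) (gamma delta : R)
    (P C : 'M[R]_n) (I1 I2 : {set 'I_N}) :
  row_stochastic P -> psd C -> 0 < gamma < 1 -> 0 < delta < 1 ->
  32 * ln (4 * n%:R ^+ 2 / delta) / (1 - gamma) ^+ 2 <= nh%:R ->
  #|I1| = nh -> #|I2| = nh ->
  iid_prob P (fun w => [exists yb : 'I_n * bool, diagnorm C * (1 - gamma) ^+ 2 / 2 <
                 qform C (row_dev P (holdout_est R nh (if yb.2 then I1 else I2) w) yb.1)])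
  <= delta.
Proof.
move=> P_stoch C_psd g01 d01 nh_ge I1_card I2_card.
have [P_ge0 _] := P_stoch; have /andP[d_gt0 _] := d01.
apply: le_trans (iid_prob_exists_le P_ge0 _) _.
apply: (@le_trans _ _ (\sum_(yb : 'I_n * bool) delta / (2 * n%:R))).
  by apply: ler_sum => -[y []] _; apply: prob_holdout_row_dev_gt.
rewrite sumr_const card_prod card_ord card_bool.
have [->|n_gt0] := posnP n; first by rewrite mul0n mulr0n ltW.
have -> : delta / (2 * n%:R) *+ (n * 2) = delta.
  by rewrite -mulr_natr natrM; field; rewrite pnatr_eq0 -lt0n.
by [].
Qed.

Section Perturbation.
Variables (R : realType) (n : nat) (C : 'M[R]_n) (c g : R) (P Q : 'M[R]_n).
Hypotheses (C_sym : C^T = C) (C_psd : forall v : 'cV[R]_n, 0 <= (v^T *m C *m v) 0 0).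
Hypotheses (C_diag_le : forall i, C i i <= c) (c_ge0 : 0 <= c).
Hypotheses (g_gt0 : 0 < g) (g_lt1 : g < 1).
Hypotheses (Q_ge0 : forall i j, 0 <= Q i j) (Q_sum1 : forall i, \sum_j Q i j = 1).
Hypothesis row_dev_small : forall y, qform C (row_dev P Q y) <= c * (1 - g) ^+ 2 / 2.

Lemma row_inv_discount_mul x :
  (row x (invmx (discount_mx g Q) *m discount_mx g P))^T =
  delta_mx x 0 + g *: \sum_y invmx (discount_mx g Q) x y *: row_dev P Q y.
Proof.
have -> : invmx (discount_mx g Q) *m discount_mx g P =
          1%:M + g *: (invmx (discount_mx g Q) *m (Q - P)).
  have -> : discount_mx g P = discount_mx g Q + g *: (Q - P).
    by rewrite /discount_mx scalerBr addrA subrK.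
  by rewrite mulmxDr mulVmx ?scalemxAr // discount_mx_unit.
apply/matrixP => i j; rewrite (ord1 j) !mxE summxE.
congr (_ + _); first by rewrite eq_sym andbT.
by congr (_ * _); elim/big_rec2: _ => [|y a b _ ->]; rewrite ?mxE.
Qed.

(* [71/100 >= 1 / sqrt 2] *)
Lemma qnorm_row_dev_le y : qnorm C (row_dev P Q y) <= 71/100 * (1 - g) * Num.sqrt c.
Proof.
have rhs_ge0 : 0 <= 71/100 * (1 - g) * Num.sqrt c.
  by rewrite !mulr_ge0 ?invr_ge0 ?sqrtr_ge0 ?subr_ge0 ?ltW.
rewrite /qnorm -(ger0_norm rhs_ge0) -sqrtr_sqr ler_sqrt ?sqr_ge0 //.
apply: le_trans (row_dev_small y) _; rewrite !exprMn sqr_sqrtr //.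
have : 0 <= (1 - g) ^+ 2 * c by rewrite mulr_ge0 ?sqr_ge0.
lra.
Qed.

Lemma qnorm_row_inv_discount_mul_le x :
  qnorm C (row x (invmx (discount_mx g Q) *m discount_mx g P))^T <= 171/100 * Num.sqrt c.
Proof.
set S := \sum_y invmx (discount_mx g Q) x y *: row_dev P Q y.
have S_le : qnorm C S <= 71/100 * Num.sqrt c.
  apply: le_trans (ler_qnorm_sum C_sym C_psd _ _) _.
  apply: (@le_trans _ _
    (\sum_y `|invmx (discount_mx g Q) x y| * (71/100 * (1 - g) * Num.sqrt c))).
    by apply: ler_sum => y _; rewrite qnormZ ler_wpM2l ?qnorm_row_dev_le.
  rewrite -mulr_suml.
  apply: le_trans (ler_wpM2r _ (sum_norm_inv_discount_mx g_gt0 g_lt1 Q_ge0 Q_sum1 x)) _.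
    by rewrite !mulr_ge0 ?invr_ge0 ?sqrtr_ge0 ?subr_ge0 ?ltW.
  have -> : (1 - g)^-1 * (71/100 * (1 - g) * Num.sqrt c) = 71/100 * Num.sqrt c.
    by field; rewrite subr_eq0 gt_eqF.
  by [].
rewrite row_inv_discount_mul -/S; apply: le_trans (ler_qnormD C_sym C_psd _ _) _.
rewrite qnormZ (ger0_norm (ltW g_gt0)).
have gS_le : g * qnorm C S <= qnorm C S by rewrite ler_piMl ?qnorm_ge0 ?ltW.
by have := qnorm_delta_le C_diag_le c_ge0 x; lra.
Qed.

End Perturbation.

Lemma diagnorm_perturbed_le (R : realType) (n : nat) (g : R) (C Q1 Q2 P : 'M[R]_n) :
  0 < g < 1 -> row_stochastic Q1 -> row_stochastic Q2 -> psd C ->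
  (forall y, qform C (row_dev P Q1 y) <= diagnorm C * (1 - g) ^+ 2 / 2) ->
  (forall y, qform C (row_dev P Q2 y) <= diagnorm C * (1 - g) ^+ 2 / 2) ->
  diagnorm (invmx (discount_mx g Q1) *m (discount_mx g P *m C *m (discount_mx g P)^T)
            *m (invmx (discount_mx g Q2))^T) <= 3 * diagnorm C.
Proof.
move=> /andP[g_gt0 g_lt1] [Q1_ge0 Q1_sum1] [Q2_ge0 Q2_sum1] [C_sym C_psd] small1 small2.
set A1 := invmx (discount_mx g Q1) *m discount_mx g P.
set A2 := invmx (discount_mx g Q2) *m discount_mx g P.
have -> : invmx (discount_mx g Q1) *m (discount_mx g P *m C *m (discount_mx g P)^T)
          *m (invmx (discount_mx g Q2))^T = A1 *m C *m A2^T by rewrite trmx_mul !mulmxA.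
have C_diag_le := ler_diagnorm C; have c_ge0 := diagnorm_ge0 C.
apply: diagnorm_le => [|x]; first by rewrite mulr_ge0.
rewrite mulmx_tr_diag; apply: le_trans (ler_norm_bform C_sym C_psd _ _) _.
have row_le := qnorm_row_inv_discount_mul_le C_sym C_psd C_diag_le c_ge0 g_gt0 g_lt1.
apply: le_trans (ler_pM (qnorm_ge0 _ _) (qnorm_ge0 _ _)
                   (row_le _ _ Q1_ge0 Q1_sum1 small1 x)
                   (row_le _ _ Q2_ge0 Q2_sum1 small2 x)) _.
have -> : 171/100 * Num.sqrt (diagnorm C) * (171/100 * Num.sqrt (diagnorm C)) =
          (171/100) ^+ 2 * Num.sqrt (diagnorm C) ^+ 2 by ring.
by rewrite sqr_sqrtr //; lra.
Qed.

Unset Implicit Arguments.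

Theorem lemma1 (R : realType) (n : nat) (gamma delta : R) (P : 'M[R]_n)
  (N nh : nat) (I1 I2 : {set 'I_N}) (M : 'M[R]_n) :
  0 < gamma < 1 -> 0 < delta < 1 -> row_stochastic P ->
  32 * ln (4 * (n%:R) ^+ 2 / delta) / (1 - gamma) ^+ 2 <= nh%:R ->
  #|I1| = nh -> #|I2| = nh -> [disjoint I1 & I2] ->
  psd M ->
  1 - delta <=
  iid_prob P (fun w =>
    diagnorm (invmx (1%:M - gamma *: holdout_est R nh I1 w) *m M
              *m (invmx (1%:M - gamma *: holdout_est R nh I2 w))^T)
    <= 3 * diagnorm (invmx (1%:M - gamma *: P) *m M *m (invmx (1%:M - gamma *: P))^T)).
Proof.
(* The two estimates need not be independent: only a union bound is used. *)
move=> g01 d01 [P_ge0 P_sum1] nh_ge I1_card I2_card _ M_psd.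
have /andP[g_gt0 g_lt1] := g01.
have G_unit := discount_mx_unit g_gt0 g_lt1 P_ge0 P_sum1.
set C := invmx (discount_mx gamma P) *m M *m (invmx (discount_mx gamma P))^T.
have C_psd : psd C by exact: psd_mulmx_tr.
have M_eq : M = discount_mx gamma P *m C *m (discount_mx gamma P)^T.
  by rewrite /C !mulmxA mulmxV // mul1mx -mulmxA -trmx_mul mulmxV // trmx1 mulmx1.
pose bad (yb : 'I_n * bool) w := diagnorm C * (1 - gamma) ^+ 2 / 2 <
  qform C (row_dev P (holdout_est R nh (if yb.2 then I1 else I2) w) yb.1).
apply: (@le_trans _ _ (iid_prob P (predC (fun w => [exists yb, bad yb w])))).
  rewrite iid_prob_predC // lerD2l lerN2.
  exact: prob_holdout_rows_dev_gt C_psd g01 d01 nh_ge I1_card I2_card.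
apply: iid_prob_le => // w /= /existsPn not_bad.
rewrite [in X in diagnorm X <= _]M_eq.
have stoch I := holdout_est_sample_stochastic (I := I) w g01 d01 nh_ge.
apply: (diagnorm_perturbed_le g01 (stoch _ I1_card) (stoch _ I2_card) C_psd).
- by move=> y; have := not_bad (y, true); rewrite leNgt.
- by move=> y; have := not_bad (y, false); rewrite leNgt.
Qed.
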